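(* If $f:\mathbb{R}^{N}\rightarrow [0,\infty ]$ and $\hat{f}=0$, then either $f=0$ or there are $x_{0}\in \mathbb{R}^{N}$ and $0<z\leq \infty$ such that $f(x_0)=z$ and $f(x)=0$ for all $x\neq x_{0}$.
   Context: Enclosing balls: for nonempty bounded $X\subset\mathbb{R}^N$, $\overline{B}_X$ is the unique closed ball of minimal diameter containing $X$; $\overline{B}_X:=\mathbb{R}^N$ if $X$ unbounded; $\overline{B}_\emptyset:=\{0\}$. For $f:\mathbb{R}^N\to[-\infty,\infty]$ and $\xi\in[-\infty,\infty]$, $\rho^+_f(\xi)\in[0,\infty]$ is the radius of $\overline{B}_{\{f>\xi\}}$, $\gamma^+_f(t):=\inf\{\xi:\rho^+_f(\xi)\le t\}$ for $t\in[0,\infty)$, and $\hat f(x):=\gamma^+_f(|x|)$. *)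

From HB Require Import structures.
From mathcomp Require Import all_boot all_order all_algebra.
From mathcomp Require Import all_classical all_reals ereal.
Set Implicit Arguments. Unset Strict Implicit. Unset Printing Implicit Defensive.
Import Order.TTheory GRing.Theory Num.Theory.
Local Open Scope ring_scope.
Local Open Scope classical_set_scope.

Definition enorm (R : realType) (N : nat) (x : 'rV[R]_N) : R :=
  Num.sqrt (\sum_(i < N) (x ord0 i) ^+ 2).

Definition cball (R : realType) (N : nat) (c : 'rV[R]_N) (r : R) : set 'rV[R]_N :=
  [set x | enorm (x - c) <= r].

(* For X unbounded no such ball exists and the radius is +oo (B_X = R^N);
   for X empty every ball works, radius 0 (B_empty = {0}). *)
Definition enc_radius (R : realType) (N : nat) (X : set 'rV[R]_N) : \bar R :=
  ereal_inf [set (r%:E)%E | r in [set r : R | 0 <= r /\ exists c, X `<=` cball c r]].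

Definition rho_plus (R : realType) (N : nat) (f : 'rV[R]_N -> \bar R) (xi : \bar R)
  : \bar R := enc_radius [set x | (xi < f x)%E].

Definition gamma_plus (R : realType) (N : nat) (f : 'rV[R]_N -> \bar R) (t : R)
  : \bar R := ereal_inf [set xi : \bar R | (rho_plus f xi <= t%:E)%E].

Definition fhat (R : realType) (N : nat) (f : 'rV[R]_N -> \bar R) (x : 'rV[R]_N)
  : \bar R := gamma_plus f (enorm x).

From mathcomp Require Import all_boot all_order all_algebra.
From mathcomp Require Import all_classical all_reals ereal.
Import Order.TTheory GRing.Theory Num.Theory.
Local Open Scope ring_scope.
Local Open Scope classical_set_scope.

(* Since [hat f 0 = gamma^+_f(0) = 0], for two points where f is positive some
   level below both values has a superlevel set of enclosing radius 0; a set
   with enclosing radius 0 has at most one point, because two distinct points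
   differing by d in some coordinate do not fit in a ball of radius < d/2.
   Hence f is positive at most at one point. *)

Section EnclosingRadius.
Variables (R : realType) (N : nat).
Implicit Types (x y c : 'rV[R]_N) (X : set 'rV[R]_N).

Lemma enorm0 : enorm (0 : 'rV[R]_N) = 0.
Proof. by rewrite /enorm big1 ?sqrtr0 // => i _; rewrite mxE expr0n. Qed.

Lemma normr_coord_le_enorm x i : `|x ord0 i| <= enorm x.
Proof.
rewrite /enorm -sqrtr_sqr ler_sqrt ?sumr_ge0 // => [|j _]; last exact: sqr_ge0.
by rewrite (bigD1 i) //= lerDl sumr_ge0 // => j _; exact: sqr_ge0.
Qed.

Lemma cball_coord_dist c r x y i :
  cball c r x -> cball c r y -> `|x ord0 i - y ord0 i| <= r *+ 2.
Proof.
rewrite /cball /= => xc yc.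
have xci := le_trans (normr_coord_le_enorm (x - c) i) xc.
have yci := le_trans (normr_coord_le_enorm (y - c) i) yc.
rewrite !mxE in xci yci.
have -> : x ord0 i - y ord0 i = (x ord0 i - c ord0 i) - (y ord0 i - c ord0 i).
  by rewrite opprB addrA subrK.
by rewrite mulr2n; apply: le_trans (ler_normB _ _) (lerD xci yci).
Qed.

Lemma enc_radius_le0_subset1 X : (enc_radius X <= 0)%E -> is_subset1 X.
Proof.
move=> X0 x y Xx Xy; apply/rowP => i; apply/eqP; apply: contraT => xy_neq.
have d_gt0 : 0 < `|x ord0 i - y ord0 i| / 2.
  by rewrite divr_gt0 // normr_gt0 subr_eq0.
have : ((`|x ord0 i - y ord0 i| / 2)%:E <= enc_radius X)%E.
  apply/ereal_infP => _ [r [_ [c Xc]] <-].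
  by rewrite lee_fin ler_pdivrMr // mulr_natr (@cball_coord_dist c) //; exact: Xc.
by move/le_trans/(_ X0); rewrite lee_fin leNgt d_gt0.
Qed.

Lemma gamma_plus0_subset1 (f : 'rV[R]_N -> \bar R) :
  gamma_plus f 0 = 0%E -> is_subset1 [set x | (0 < f x)%E].
Proof.
move=> g0 x y /= fx_gt0 fy_gt0.
have : (gamma_plus f 0 < Order.min (f x) (f y))%E by rewrite g0 lt_min fx_gt0.
case/ereal_inf_lt => xi /enc_radius_le0_subset1 rho0.
by rewrite lt_min => /andP[? ?]; exact: rho0.
Qed.

End EnclosingRadius.

Theorem lemma12 (R : realType) (N : nat) (f : 'rV[R]_N -> \bar R)
  (f_ge0 : forall x, (0 <= f x)%E)
  (hat0 : forall x, fhat f x = 0%E) :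
  (forall x, f x = 0%E) \/
  (exists (x0 : 'rV[R]_N) (z : \bar R),
      (0 < z)%E /\ f x0 = z /\ forall x, x != x0 -> f x = 0%E).
Proof.
have f_eq0 x : ~ (0 < f x)%E -> f x = 0%E.
  by move/negP; rewrite -leNgt => fx_le0; apply/eqP; rewrite eq_le fx_le0 f_ge0.
have pos_subset1 : is_subset1 [set x | (0 < f x)%E].
  by apply: gamma_plus0_subset1; rewrite -(hat0 0) /fhat enorm0.
have [[x0 fx0_gt0]|no_pos] := pselect (exists x, (0 < f x)%E).
  right; exists x0, (f x0); split; [by [] | split => // x /eqP x_neq].
  by apply: f_eq0 => fx_gt0; apply: x_neq; exact: pos_subset1.
by left => x; apply: f_eq0 => fx_gt0; apply: no_pos; exists x.
Qed.
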